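(* For $k\in\mathbb{N}$ and $n=2^k-1$, for all $1\le j<n$, $$\bar\mu^{(k)}_{n,j}=(\rho^k-1)\big(c^{(k)}_j-\pi^{(k)}_j\big).$$ Consequently, for all $1\le j<n$, $$\mu^{(k+1)}_{n,j}=\frac{\rho^{2k-1}}{\rho^{k-1}+1}\big(c^{(k)}_j-\pi^{(k)}_j\big)\ge0 .$$
   Context: $\rho=1+\sqrt2$; $\alpha_t=\rho^{\nu(t+1)-1}+1$ ($\nu(i)$ the largest $j$ with $2^j\mid i$). For $k\in\mathbb{N}$, $n=2^k-1$, $\pi^{(k)}=[\alpha_0,\dots,\alpha_{n-1}]$, indexed $\pi^{(k)}_1,\dots,\pi^{(k)}_n$. Define $c^{(k)}\in\mathbb{R}^n$ (indexed $1,\dots,n$) by $c^{(1)}=[2(\rho-1)]$, $c^{(k+1)}=[\pi^{(k)},(1+\rho^{-k})(\rho^{k-1}+1),\rho c^{(k)}-(\rho-1-\rho^{-k})\pi^{(k)}]$. Multipliers $\mu^{(k)}_{i,j}$, $i\in\{1,\dots,n,*\}$, $j\in\{1,\dots,n\}$: $\mu^{(k)}_{i,j}=\bar\mu^{(k)}_{i,j}$ for $i\ne*$ and $\mu^{(k)}_{*,j}=c^{(k)}_j+\mathbf 1\{j=1\}$. $\bar\mu^{(1)}_{1,1}=0$. For $n=2^k-1$ and $1\le i,j\le 2n+1$, $\bar\mu^{(k+1)}_{i,j}$ is the sum of: $\bar\mu^{(k)}_{i,j}\mathbf 1\{1\le i,j\le n\}+\rho^2\bar\mu^{(k)}_{i-n-1,j-n-1}\mathbf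 1\{n+2\le i,j\le 2n+1\}$; $\rho^k\mathbf 1\{(i,j)=(n,n+1)\}+\rho^2\mathbf 1\{(i,j)=(n+1,n+2)\}+(\rho-\rho^{-k})(\rho^{k-1}+1)\mathbf 1\{(i,j)=(2n+1,n+1)\}$; and $\big(1-\frac{\rho^k}{\rho^{k-1}+1}\big)(c^{(k)}_j-\pi^{(k)}_j)\mathbf 1\{i=n,1\le j\le n\}+\frac{\rho^k}{\rho^{k-1}+1}(c^{(k)}_j-\pi^{(k)}_j)\mathbf 1\{i=n+1,1\le j\le n\}+\frac{\rho^k}{\rho^{k-1}+1}\pi^{(k)}_{j-n-1}\mathbf 1\{i=n,n+2\le j\le 2n+1\}+\frac{\rho}{\rho^{k-1}+1}\pi^{(k)}_{j-n-1}\mathbf 1\{i=n+1,n+2\le j\le2n+1\}+\big((\rho+1)c^{(k)}_{j-n-1}-(1+\rho^{-k})\pi^{(k)}_{j-n-1}\big)\mathbf 1\{i=2n+1,n+2\le j\le 2n+1\}$. *)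

(* concrete reals R. All vectors/matrices are 1-indexed
   functions on nat, equal to 0 outside their index range. *)
From Stdlib Require Import Reals Lra Lia Arith.
Open Scope bool_scope.
Open Scope R_scope.

Definition rho : R := 1 + sqrt 2.

(* nu i = largest j with 2^j | i (for i >= 1); computed with fuel i. *)
Fixpoint nu_aux (fuel i : nat) : nat :=
  match fuel with
  | O => O
  | S f => if ((0 <? i) && (i mod 2 =? 0))%nat then S (nu_aux f (i / 2)) else O
  end.
Definition nu (i : nat) : nat := nu_aux i i.

(* alpha_t = rho^(nu(t+1) - 1) + 1 (integer exponent, may be -1) *)
Definition alpha (t : nat) : R :=
  powerRZ rho (Z.of_nat (nu (t + 1)) - 1)%Z + 1.

Definition inrange (n j : nat) : bool := ((1 <=? j) && (j <=? n))%nat.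

Definition pi (k j : nat) : R :=
  if inrange (2 ^ k - 1) j then alpha (j - 1) else 0.

Definition c_step (k : nat) (ck : nat -> R) (j : nat) : R :=
  let n := (2 ^ k - 1)%nat in
  if inrange n j then pi k j
  else if (j =? n + 1)%nat then (1 + / rho ^ k) * (rho ^ (k - 1) + 1)
  else if inrange (2 * n + 1) j then
    rho * ck (j - n - 1)%nat - (rho - 1 - / rho ^ k) * pi k (j - n - 1)
  else 0.

Fixpoint c (k : nat) : nat -> R :=
  match k with
  | O => fun _ => 0
  | S O => fun j => if (j =? 1)%nat then 2 * (rho - 1) else 0
  | S ((S _) as k') => c_step k' (c k')
  end.

Definition ind (b : bool) : R := if b then 1 else 0.

Definition mubar_step (k : nat) (mk : nat -> nat -> R) (i j : nat) : R :=
  let n := (2 ^ k - 1)%nat in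
  let N := (2 * n + 1)%nat in
  let ck := c k in
  if (inrange N i && inrange N j)%bool then
      mk i j * ind (inrange n i && inrange n j)
    + rho ^ 2 * mk (i - n - 1)%nat (j - n - 1)%nat
        * ind ((n + 2 <=? i) && (i <=? N) && (n + 2 <=? j) && (j <=? N))%nat
    + rho ^ k * ind ((i =? n) && (j =? n + 1))%nat
    + rho ^ 2 * ind ((i =? n + 1) && (j =? n + 2))%nat
    + (rho - / rho ^ k) * (rho ^ (k - 1) + 1) * ind ((i =? N) && (j =? n + 1))%nat
    + (1 - rho ^ k / (rho ^ (k - 1) + 1)) * (ck j - pi k j)
        * ind ((i =? n)%nat && inrange n j)
    + rho ^ k / (rho ^ (k - 1) + 1) * (ck j - pi k j)
        * ind ((i =? n + 1)%nat && inrange n j)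
    + rho ^ k / (rho ^ (k - 1) + 1) * pi k (j - n - 1)%nat
        * ind ((i =? n) && (n + 2 <=? j) && (j <=? N))%nat
    + rho / (rho ^ (k - 1) + 1) * pi k (j - n - 1)%nat
        * ind ((i =? n + 1) && (n + 2 <=? j) && (j <=? N))%nat
    + ((rho + 1) * ck (j - n - 1)%nat - (1 + / rho ^ k) * pi k (j - n - 1)%nat)
        * ind ((i =? N) && (n + 2 <=? j) && (j <=? N))%nat
  else 0.

Fixpoint mubar (k : nat) : nat -> nat -> R :=
  match k with
  | O => fun _ _ => 0
  | S O => fun _ _ => 0
  | S ((S _) as k') => mubar_step k' (mubar k')
  end.

Inductive ridx := Star | Row (i : nat).

Definition mu (k : nat) (i : ridx) (j : nat) : R :=
  match i with
  | Row i' => mubar k i' j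
  | Star => if inrange (2 ^ k - 1) j then c k j + ind (j =? 1)%nat else 0
  end.

(* Write n = 2^k - 1 and N = 2n + 1.  The row N of mubar^(k+1) is built from
   the row n of mubar^(k), and the blocks of c^(k+1) - pi^(k+1) from those of
   c^(k) - pi^(k); since rho^2 = 2 rho + 1, the recursions match and give
   mubar^(k)_{n,j} = (rho^k - 1)(c^(k)_j - pi^(k)_j) by induction on k.  The
   same kind of induction shows c^(k) - pi^(k) >= 0.  Adding the correction
   term of row n in mubar^(k+1) then produces the coefficient
   rho^(2k-1) / (rho^(k-1) + 1). *)

From Pilot Require Import Defs.
From Stdlib Require Import Reals Lra Lia.
Open Scope R_scope.

Ltac decide_tests :=
  cbv zeta; unfold inrange;
  repeat match goal with
  | |- context [Nat.eqb ?a ?b] =>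
      first [ rewrite (proj2 (Nat.eqb_eq a b)) by lia
            | rewrite (proj2 (Nat.eqb_neq a b)) by lia ]
  | |- context [Nat.leb ?a ?b] =>
      first [ rewrite (proj2 (Nat.leb_le a b)) by lia
            | rewrite (proj2 (Nat.leb_gt a b)) by lia ]
  end; cbn [andb]; unfold Defs.ind.

Lemma pow2_ge1 k : (1 <= 2 ^ k)%nat.
Proof. induction k; simpl; lia. Qed.

Lemma pow2_pred_ge1 k : (1 <= k)%nat -> (1 <= 2 ^ k - 1)%nat.
Proof. intros Hk; destruct k as [|k]; [lia|]; pose proof (pow2_ge1 k); simpl; lia. Qed.

Lemma pow2_pred_succ k : (2 ^ S k - 1 = 2 * (2 ^ k - 1) + 1)%nat.
Proof. pose proof (pow2_ge1 k); simpl; lia. Qed.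

Lemma nu_aux_fuel f g i : (i <= f)%nat -> (i <= g)%nat -> nu_aux f i = nu_aux g i.
Proof.
  revert g i; induction f as [|f IH]; intros [|g] i Hf Hg; try (replace i with 0%nat by lia; reflexivity).
  cbn [nu_aux]; destruct ((0 <? i) && (i mod 2 =? 0))%nat eqn:E; [|reflexivity].
  apply andb_prop in E as [Hi _]; apply Nat.ltb_lt in Hi.
  assert (i / 2 < i)%nat by (apply Nat.div_lt; lia).
  f_equal; apply IH; lia.
Qed.

Lemma nu_double m : (1 <= m)%nat -> nu (2 * m) = S (nu m).
Proof.
  intros Hm; unfold nu; destruct (2 * m)%nat as [|f] eqn:E; [lia|].
  cbn [nu_aux]; rewrite <- E.
  replace ((0 <? 2 * m) && ((2 * m) mod 2 =? 0))%nat with true.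
  - rewrite Nat.mul_comm, Nat.div_mul by lia; f_equal; apply nu_aux_fuel; lia.
  - symmetry; apply andb_true_intro; split; [apply Nat.ltb_lt; lia|].
    apply Nat.eqb_eq; rewrite Nat.mul_comm; apply Nat.Div0.mod_mul.
Qed.

Lemma nu_odd m : nu (2 * m + 1) = 0%nat.
Proof.
  unfold nu; destruct (2 * m + 1)%nat eqn:E; [lia|]; cbn [nu_aux]; rewrite <- E.
  rewrite Nat.add_comm, Nat.mul_comm, Nat.Div0.mod_add, Bool.andb_false_r.
  reflexivity.
Qed.

Lemma nu_pow2 k : nu (2 ^ k) = k.
Proof.
  induction k as [|k IH]; [reflexivity|].
  rewrite Nat.pow_succ_r', nu_double by apply pow2_ge1; congruence.
Qed.

Lemma nu_pow2_add k j : (1 <= j < 2 ^ k)%nat -> nu (2 ^ k + j) = nu j.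
Proof.
  revert j; induction k as [|k IH]; intros j Hj; [simpl in Hj; lia|].
  rewrite Nat.pow_succ_r' in *.
  destruct (Nat.Even_or_Odd j) as [[m ->]|[m ->]].
  - replace (2 * 2 ^ k + 2 * m)%nat with (2 * (2 ^ k + m))%nat by lia.
    rewrite !nu_double by lia; f_equal; apply IH; lia.
  - replace (2 * 2 ^ k + (2 * m + 1))%nat with (2 * (2 ^ k + m) + 1)%nat by lia.
    rewrite !nu_odd; reflexivity.
Qed.

Lemma rho_gt1 : 1 < rho.
Proof. unfold rho; pose proof (sqrt_lt_R0 2); lra. Qed.

Lemma rho_pow_pos m : 0 < rho ^ m.
Proof. apply pow_lt; pose proof rho_gt1; lra. Qed.

Lemma rho_sqr : rho ^ 2 = 2 * rho + 1.
Proof. unfold rho; pose proof (sqrt_sqrt 2 ltac:(lra)); nra. Qed.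

Lemma rho_inv : / rho = rho - 2.
Proof. pose proof rho_sqr; pose proof rho_gt1; field_simplify_eq; nra. Qed.

Lemma alpha_pos t : 0 < alpha t.
Proof.
  unfold alpha; pose proof (powerRZ_lt rho (Z.of_nat (nu (t + 1)) - 1) ltac:(pose proof rho_gt1; lra)).
  lra.
Qed.

Lemma alpha_pow2_pred k : (1 <= k)%nat -> alpha (2 ^ k - 1) = rho ^ (k - 1) + 1.
Proof.
  intros Hk; unfold alpha; pose proof (pow2_ge1 k).
  replace (2 ^ k - 1 + 1)%nat with (2 ^ k)%nat by lia.
  rewrite nu_pow2, pow_powerRZ; do 2 f_equal; lia.
Qed.

Lemma alpha_pow2_add k t : (t + 1 < 2 ^ k)%nat -> alpha (2 ^ k + t) = alpha t.
Proof.
  intros Ht; unfold alpha.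
  rewrite <- Nat.add_assoc, nu_pow2_add by lia; reflexivity.
Qed.

Lemma pi_pos k j : (1 <= j <= 2 ^ k - 1)%nat -> 0 < pi k j.
Proof. intros Hj; unfold pi; decide_tests; apply alpha_pos. Qed.

Lemma c_succ k : (1 <= k)%nat -> c (S k) = c_step k (c k).
Proof. intros Hk; destruct k; [lia|reflexivity]. Qed.

Lemma mubar_succ k : (1 <= k)%nat -> mubar (S k) = mubar_step k (mubar k).
Proof. intros Hk; destruct k; [lia|reflexivity]. Qed.

Section Blocks.

Variable k : nat.
Hypothesis k_ge1 : (1 <= k)%nat.
Local Notation n := (2 ^ k - 1)%nat.

Lemma pi_succ_low j : (1 <= j <= n)%nat -> pi (S k) j = pi k j.
Proof. intros Hj; unfold pi; rewrite pow2_pred_succ; decide_tests; reflexivity. Qed.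

Lemma pi_succ_mid : pi (S k) (n + 1) = rho ^ (k - 1) + 1.
Proof.
  pose proof (pow2_pred_ge1 k k_ge1); unfold pi; rewrite pow2_pred_succ; decide_tests.
  replace (n + 1 - 1)%nat with n by lia; exact (alpha_pow2_pred k k_ge1).
Qed.

Lemma pi_succ_high j : (n + 2 <= j <= 2 * n + 1)%nat -> pi (S k) j = pi k (j - n - 1).
Proof.
  intros Hj; unfold pi; rewrite pow2_pred_succ; decide_tests.
  replace (j - 1)%nat with (2 ^ k + (j - n - 1 - 1))%nat by lia.
  apply alpha_pow2_add; lia.
Qed.

Lemma c_succ_low j : (1 <= j <= n)%nat -> c (S k) j = pi k j.
Proof. intros Hj; rewrite c_succ by exact k_ge1; unfold c_step; decide_tests; reflexivity. Qed.

Lemma c_succ_mid : c (S k) (n + 1) = (1 + / rho ^ k) * (rho ^ (k - 1) + 1).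
Proof. rewrite c_succ by exact k_ge1; unfold c_step; decide_tests; reflexivity. Qed.

Lemma c_succ_high j : (n + 2 <= j <= 2 * n + 1)%nat ->
  c (S k) j = rho * c k (j - n - 1) - (rho - 1 - / rho ^ k) * pi k (j - n - 1).
Proof. intros Hj; rewrite c_succ by exact k_ge1; unfold c_step; decide_tests; reflexivity. Qed.

Lemma mubar_succ_row_n j : (1 <= j < n)%nat ->
  mubar (S k) n j = mubar k n j + (1 - rho ^ k / (rho ^ (k - 1) + 1)) * (c k j - pi k j).
Proof. intros Hj; rewrite mubar_succ by exact k_ge1; unfold mubar_step; decide_tests; ring. Qed.

Lemma mubar_succ_last_low j : (1 <= j <= n)%nat -> mubar (S k) (2 * n + 1) j = 0.
Proof.
  intros Hj; pose proof (pow2_pred_ge1 k k_ge1).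
  rewrite mubar_succ by exact k_ge1; unfold mubar_step; decide_tests; ring.
Qed.

Lemma mubar_succ_last_mid :
  mubar (S k) (2 * n + 1) (n + 1) = (rho - / rho ^ k) * (rho ^ (k - 1) + 1).
Proof.
  pose proof (pow2_pred_ge1 k k_ge1).
  rewrite mubar_succ by exact k_ge1; unfold mubar_step; decide_tests; ring.
Qed.

Lemma mubar_succ_last_high j : (n + 2 <= j <= 2 * n + 1)%nat ->
  mubar (S k) (2 * n + 1) j =
  rho ^ 2 * mubar k n (j - n - 1) + ((rho + 1) * c k (j - n - 1) - (1 + / rho ^ k) * pi k (j - n - 1)).
Proof.
  intros Hj; pose proof (pow2_pred_ge1 k k_ge1).
  rewrite mubar_succ by exact k_ge1; unfold mubar_step; decide_tests.
  replace (2 * n + 1 - n - 1)%nat with n by lia; ring.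
Qed.

End Blocks.

Lemma c_sub_pi_nonneg k j : (1 <= k)%nat -> (1 <= j <= 2 ^ k - 1)%nat -> 0 <= c k j - pi k j.
Proof.
  revert j; induction k as [|k IH]; intros j Hk Hj; [lia|].
  destruct (Nat.eq_dec k 0) as [->|Hk0].
  - replace j with 1%nat by (simpl in Hj; lia).
    unfold pi, alpha; simpl; unfold nu; simpl.
    rewrite Rmult_1_r, rho_inv; pose proof rho_gt1; lra.
  - assert (Hk1 : (1 <= k)%nat) by lia.
    assert (Hx : 0 < / rho ^ k) by apply Rinv_0_lt_compat, rho_pow_pos.
    rewrite pow2_pred_succ in Hj.
    assert (Hblocks : (1 <= j <= 2 ^ k - 1)%nat \/ j = (2 ^ k - 1 + 1)%nat \/
                     (2 ^ k - 1 + 2 <= j <= 2 * (2 ^ k - 1) + 1)%nat) by lia.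
    destruct Hblocks as [Hlow|[->|Hhigh]].
    + rewrite c_succ_low, pi_succ_low by assumption; lra.
    + rewrite c_succ_mid, pi_succ_mid by assumption.
      pose proof (rho_pow_pos (k - 1)); nra.
    + rewrite c_succ_high, pi_succ_high by assumption.
      assert (0 <= c k (j - (2 ^ k - 1) - 1) - pi k (j - (2 ^ k - 1) - 1)) by (apply IH; lia).
      assert (0 < pi k (j - (2 ^ k - 1) - 1)) by (apply pi_pos; lia).
      pose proof rho_gt1; nra.
Qed.

(* The high-block step of [mubar_last_row], with x = rho^k, a = c^(k)_j',
   b = pi^(k)_j'. *)
Lemma last_row_high_identity x a b : x <> 0 ->
  rho ^ 2 * ((x - 1) * (a - b)) + ((rho + 1) * a - (1 + / x) * b) =
  (rho * x - 1) * ((rho * a - (rho - 1 - / x) * b) - b).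
Proof.
  intros Hx.
  transitivity ((rho * x - 1) * ((rho * a - (rho - 1 - / x) * b) - b)
                + (rho ^ 2 - 2 * rho - 1) * (b - a)); [field; exact Hx|].
  rewrite rho_sqr; ring.
Qed.

Lemma mubar_last_row k j : (1 <= k)%nat -> (1 <= j < 2 ^ k - 1)%nat ->
  mubar k (2 ^ k - 1) j = (rho ^ k - 1) * (c k j - pi k j).
Proof.
  revert j; induction k as [|k IH]; intros j Hk Hj; [lia|].
  destruct (Nat.eq_dec k 0) as [->|Hk0]; [simpl in Hj; lia|].
  assert (Hk1 : (1 <= k)%nat) by lia.
  assert (Hx : rho ^ k <> 0) by apply Rgt_not_eq, rho_pow_pos.
  rewrite pow2_pred_succ in Hj |- *; change (rho ^ S k) with (rho * rho ^ k).
  assert (Hblocks : (1 <= j <= 2 ^ k - 1)%nat \/ j = (2 ^ k - 1 + 1)%nat \/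
                   (2 ^ k - 1 + 2 <= j <= 2 * (2 ^ k - 1) + 1)%nat) by lia.
  destruct Hblocks as [Hlow|[->|Hhigh]].
  - rewrite mubar_succ_last_low, c_succ_low, pi_succ_low by assumption; ring.
  - rewrite mubar_succ_last_mid, c_succ_mid, pi_succ_mid by assumption.
    field; exact Hx.
  - rewrite mubar_succ_last_high, c_succ_high, pi_succ_high, IH by (assumption || lia).
    apply last_row_high_identity; exact Hx.
Qed.

Theorem lemma15 (k : nat) :
  let n := (2 ^ k - 1)%nat in
  forall j : nat, (1 <= j < n)%nat ->
    mubar k n j = (rho ^ k - 1) * (c k j - pi k j) /\
    mu (S k) (Row n) j = rho ^ (2 * k - 1) / (rho ^ (k - 1) + 1) * (c k j - pi k j) /\
    0 <= rho ^ (2 * k - 1) / (rho ^ (k - 1) + 1) * (c k j - pi k j).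
Proof.
  intros n j Hj.
  assert (Hk : (1 <= k)%nat) by (destruct k; [subst n; simpl in Hj; lia | lia]).
  pose proof (rho_pow_pos (k - 1)) as Hpos.
  assert (Hsplit : rho ^ (2 * k - 1) = rho ^ k * rho ^ (k - 1))
    by (rewrite <- pow_add; f_equal; lia).
  assert (Hd : 0 <= c k j - pi k j) by (apply c_sub_pi_nonneg; lia).
  split; [|split].
  - exact (mubar_last_row k j Hk Hj).
  - cbn [mu]; rewrite mubar_succ_row_n, mubar_last_row, Hsplit by assumption.
    field; lra.
  - rewrite Hsplit; apply Rmult_le_pos; [|exact Hd].
    apply Rlt_le, Rdiv_lt_0_compat; [apply Rmult_lt_0_compat; apply rho_pow_pos | lra].
Qed.
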